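(* Let $P$ be a $d$-dimensional convex polytope and $O$ an acyclic orientation of its graph $G_P$. Then $f^O=\sum_{i=0}^d f_i(P)$ if and only if all of the following hold: (1) each nonempty face $F$ of $P$ has a unique sink (of $G_F$ with respect to $O$); (2) each nonempty face $F$ of $P$ is simple at its sink, i.e. the sink has degree $\dim F$ in $G_F$; (3) for each vertex $v$ of $P$, there is a face of $P$ which has $v$ as its sink and contains every edge of $P$ oriented towards $v$.
   Context: The graph $G_P=(V_P,E_P)$ of a polytope $P$ has vertex set the vertices of $P$, with two vertices adjacent iff some $1$-dimensional face of $P$ contains both; for a face $F$, $G_F$ is its graph, oriented by restricting $O$. $f_i(P)$ is the number of $i$-dimensional faces of $P$. For an orientation $O$ of a graph $G=(V,E)$, $f^O:=\sum_{v\in V}2^{\operatorname{indeg}(v)}$. A sink of a graph with respect to an orientation is a vertex all of whose incident edges are oriented towards it. *)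

(* A polytope P in R^n (R an ordered field) is given by the
   finite family of its vertices V : T -> 'rV[R]_n, T a finType. *)
From HB Require Import structures.
From mathcomp Require Import all_boot all_order all_algebra.
From mathcomp Require Import boolp.
Set Implicit Arguments. Unset Strict Implicit. Unset Printing Implicit Defensive.
Import Order.TTheory GRing.Theory Num.Theory.
Local Open Scope ring_scope.

Section Polytope.
Variables (R : realFieldType) (n : nat) (T : finType) (V : T -> 'rV[R]_n).

Definition dotv (c x : 'rV[R]_n) : R := \sum_(k < n) c 0 k * x 0 k.

Definition in_conv_of (A : {set T}) (x : 'rV[R]_n) : Prop :=
  exists lam : T -> R,
    [/\ forall j, 0 <= lam j, forall j, j \notin A -> lam j = 0,
        \sum_j lam j = 1 & \sum_j lam j *: V j = x].

(* every V i is a vertex (extreme point) of conv(V): it is not a convex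
   combination of the other points (this also forces V injective). *)
Definition convex_position : Prop :=
  forall i, ~ in_conv_of [set~ i] (V i).

(* nonempty faces of P = conv(V), identified by their vertex sets:
   the vertices maximizing a linear functional c (c = 0 gives P itself) *)
Definition is_face (F : {set T}) : Prop :=
  exists c : 'rV[R]_n, F = [set i | [forall j, dotv c (V j) <= dotv c (V i)]].

(* dimension of (the face with vertex set) F = dim of its affine hull *)
Definition fdim (F : {set T}) : nat :=
  \dim <<[seq V i - V j | i <- enum F, j <- enum F]>>%VS.

Definition fnum (i : nat) : nat :=
  #|[set F : {set T} | `[< is_face F /\ fdim F = i >] ]|.

Definition adj (u v : T) : Prop :=
  u <> v /\ exists F, [/\ is_face F, fdim F = 1%N, u \in F & v \in F].

(* O u v means the edge {u,v} is oriented u -> v *)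
Definition orientation (O : rel T) : Prop :=
  (forall u v, O u v -> adj u v) /\
  (forall u v, adj u v -> (O u v /\ ~ O v u) \/ (O v u /\ ~ O u v)).

Definition acyclic (O : rel T) : Prop :=
  forall u v, O u v -> ~~ connect O v u.

Definition indeg (O : rel T) (v : T) : nat := #|[set u | O u v]|.

Definition fO (O : rel T) : nat := \sum_(v : T) 2 ^ indeg O v.

(* G_F: vertices F, edges = edges of P contained in F (these are the
   1-faces of F). Sink of G_F w.r.t. O. *)
Definition sink_of (O : rel T) (F : {set T}) (v : T) : Prop :=
  v \in F /\ forall u, u \in F -> adj u v -> O u v.

Definition deg_in (F : {set T}) (v : T) : nat :=
  #|[set u in F | `[< adj u v >] ]|.

End Polytope.

(* Since 2^indeg(v) counts the sets of in-neighbours of v, f^O is the number of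
   pairs (v, S) with S a set of in-neighbours of v.  Send each nonempty face F to
   (v, N), where v is a sink of F and N the set of neighbours of v inside F.  This
   is injective: a linear functional maximised at a vertex v over its neighbours
   in a face is maximised at v over the whole face, so a face is determined by one
   of its vertices and its edges at that vertex.  Hence f^O >= f_0 + ... + f_d,
   with equality iff every pair (v, S) is hit.  If it is, every face has a unique
   sink; the face hit by (v, N minus u) separates the edge u from the other edges
   at the sink v, so these edge directions are independent (simplicity); and the
   face hit by (v, all in-neighbours) gives (3).  Conversely, (3) gives a face
   through v whose edges at v are exactly the incoming ones, simplicity lets any
   subset S of them be cut out by a subface, and by (1) that subface has sink v.
   The convexity input is that every vertex is exposed, which follows from
   Gordan's alternative, proved by Fourier-Motzkin elimination. *)

From HB Require Import structures.
From mathcomp Require Import all_boot all_order all_algebra.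
From mathcomp Require Import boolp ring lra.
Set Implicit Arguments. Unset Strict Implicit. Unset Printing Implicit Defensive.
Import Order.TTheory GRing.Theory Num.Theory.
Local Open Scope ring_scope.

Section Dot.
Variables (R : realFieldType) (n : nat).
Implicit Types (a : R) (c x y : 'rV[R]_n).

Fact dotv_is_linear c : linear_for *%R (dotv c).
Proof.
move=> a x y; rewrite /dotv mulr_sumr -big_split.
by apply: eq_bigr => k _; rewrite !mxE mulrDr mulrCA.
Qed.

HB.instance Definition _ c :=
  GRing.isLinear.Build R 'rV[R]_n R *%R (dotv c) (dotv_is_linear c).

(* [linearB] would leave the linear-structure projection in place of [dotv]. *)
Lemma dotvBr c x y : dotv c (x - y) = dotv c x - dotv c y.
Proof. exact: linearB. Qed.

Lemma dotvC c x : dotv c x = dotv x c.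
Proof. by apply: eq_bigr => k _; rewrite mulrC. Qed.

Lemma dotvDl c1 c2 x : dotv (c1 + c2) x = dotv c1 x + dotv c2 x.
Proof. by rewrite !(dotvC _ x) linearD. Qed.

Lemma dotvZl a c x : dotv (a *: c) x = a * dotv c x.
Proof. by rewrite !(dotvC _ x) linearZ. Qed.

Lemma dotvNl c x : dotv (- c) x = - dotv c x.
Proof. by rewrite !(dotvC _ x) linearN. Qed.

Lemma dotvv_gt0 x : x != 0 -> 0 < dotv x x.
Proof.
move=> nx; have [k xk] : exists k, x 0 k != 0.
  apply/existsP; apply: contraR nx => /existsPn x0; apply/eqP/matrixP => i j.
  by rewrite (ord1 i) mxE; apply/eqP; move: (x0 j); rewrite negbK.
rewrite /dotv (bigD1 k) //= ltr_pwDl //.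
  by rewrite -expr2 lt_def sqr_ge0 andbT sqrf_eq0.
by rewrite sumr_ge0 // => i _; rewrite -expr2 sqr_ge0.
Qed.

End Dot.

Section RealBounds.
Variable R : realFieldType.

Lemma exists_scale_bound (I : finType) (A : pred I) (p q : I -> R) :
  (forall i, A i -> 0 < q i) -> exists t, forall i, A i -> p i < t * q i.
Proof.
move=> q_gt0; exists (1 + \sum_(j | A j) `|p j| / q j) => i Ai.
have qi_gt0 := q_gt0 i Ai.
apply: le_lt_trans (ler_norm (p i)) _; rewrite mulrDl mul1r ltr_pwDl //.
rewrite -ler_pdivrMr // (bigD1 i) //= lerDl sumr_ge0 // => j /andP[Aj _].
by rewrite divr_ge0 // ltW // q_gt0.
Qed.

Lemma exists_strict_ub (I : finType) (A : {set I}) (L : I -> R) (a g : R) :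
  A != set0 -> 0 <= a -> (forall j, j \in A -> a * L j + g < 0) ->
  exists s, (forall j, j \in A -> L j < s) /\ a * s + g < 0.
Proof.
case/set0Pn => j0 j0A a_ge0 aLg.
have [M MA M_max] := arg_maxP L j0A; have aMg := aLg M MA.
have a1_gt0 : 0 < a + 1 by rewrite ltr_wpDl.
exists (L M - (a * L M + g) / (a + 1)); split.
  move=> j jA; apply: le_lt_trans (M_max j jA) _.
  by rewrite ltrDl oppr_gt0 pmulr_llt0 ?invr_gt0.
have -> : a * (L M - (a * L M + g) / (a + 1)) + g = (a * L M + g) / (a + 1).
  by field; rewrite gt_eqF.
by rewrite pmulr_llt0 ?invr_gt0.
Qed.

End RealBounds.

Section Gordan.
Variables (R : realFieldType) (n : nat) (I : finType).
Implicit Types (A : {set I}) (a : I -> 'rV[R]_n).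

Lemma in_conv_ofS a (A B : {set I}) x : A \subset B -> in_conv_of a A x -> in_conv_of a B x.
Proof.
move=> AB [lam [lam_ge0 lamA lam1 lamx]]; exists lam; split => // j jB.
by apply: lamA; apply: contra jB; apply: (subsetP AB).
Qed.

Lemma sum_delta_scale k (F : I -> 'rV[R]_n) : \sum_j (j == k)%:R *: F j = F k.
Proof.
by rewrite (bigD1 k) //= eqxx scale1r big1 ?addr0 // => j /negbTE ->; rewrite scale0r.
Qed.

Lemma sum_delta (k : I) : \sum_j (j == k)%:R = 1 :> R.
Proof. by rewrite (bigD1 k) //= eqxx big1 ?addr0 // => j /negbTE ->. Qed.

Lemma in_conv_of0_normalize a A (mu : I -> R) :
  (forall j, 0 <= mu j) -> (forall j, j \notin A -> mu j = 0) ->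
  0 < \sum_j mu j -> \sum_j mu j *: a j = 0 -> in_conv_of a A 0.
Proof.
move=> mu_ge0 muA mu_gt0 mu_a; exists (fun j => mu j / \sum_i mu i); split.
- by move=> j; rewrite divr_ge0 // ltW.
- by move=> j /muA ->; rewrite mul0r.
- by rewrite -mulr_suml divff // gt_eqF.
- under eq_bigr do rewrite mulrC -scalerA.
  by rewrite -scaler_sumr mu_a scaler0.
Qed.

Lemma conv_weights_gt0 A (lam q : I -> R) :
  (forall j, 0 <= lam j) -> (forall j, j \notin A -> lam j = 0) ->
  \sum_j lam j = 1 -> (forall j, j \in A -> 0 < q j) ->
  0 < \sum_j lam j * q j.
Proof.
move=> lam_ge0 lamA lam1 qA.
have term_ge0 j : 0 <= lam j * q j.
  case: (boolP (j \in A)) => [/qA/ltW q_ge0 | /lamA ->]; last by rewrite mul0r.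
  exact: mulr_ge0.
have [j /andP[_ lam_j]] : exists j, true && (0 < lam j).
  by apply: psumr_neq0P => //; rewrite lam1; apply/eqP; exact: oner_neq0.
have jA : j \in A by apply: contraTT lam_j => /lamA ->; rewrite ltxx.
rewrite lt_def sumr_ge0 // andbT psumr_neq0 //.
by apply/hasP; exists j; rewrite ?mem_index_enum // pmulr_rgt0 // qA.
Qed.

Section GordanStep.
Variables (A : {set I}) (a : I -> 'rV[R]_n) (k : I) (c : 'rV[R]_n).
Hypotheses (kA : k \in A) (c_neg : forall j, j \in A :\ k -> dotv c (a j) < 0).
Hypothesis c_ak_ge0 : 0 <= dotv c (a k).

(* [b j] is [a j] pushed along [a k] into the hyperplane [dotv c _ = 0]. *)
Let b j := dotv c (a k) *: a j - dotv c (a j) *: a k.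

Lemma gordan_step_conv : in_conv_of b (A :\ k) 0 -> in_conv_of a A 0.
Proof.
case=> lam [lam_ge0 lamA lam1 lam_b].
set be := \sum_j lam j * - dotv c (a j).
have be_gt0 : 0 < be.
  by apply: conv_weights_gt0 lam_ge0 lamA lam1 _ => j /c_neg; rewrite oppr_gt0.
apply: (in_conv_of0_normalize (mu := fun j => dotv c (a k) * lam j + be * (j == k)%:R)).
- by move=> j; rewrite addr_ge0 ?mulr_ge0 ?ler0n ?(ltW be_gt0).
- move=> j jA; rewrite lamA ?mulr0 ?add0r; last by rewrite in_setD1 (negbTE jA) andbF.
  by case: eqP jA => [->|]; rewrite ?kA ?mulr0.
- rewrite big_split /= -!mulr_sumr lam1 mulr1 (bigD1 k) //= eqxx big1 ?addr0.
    by rewrite mulr1 ltr_wpDl.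
  by move=> j /negbTE ->.
have comb_b : \sum_j lam j *: b j = dotv c (a k) *: \sum_j lam j *: a j + be *: a k.
  rewrite scaler_sumr /be scaler_suml -big_split /=; apply: eq_bigr => j _.
  by rewrite /b scalerBr !scalerA mulrN scaleNr mulrC.
under eq_bigr do rewrite scalerDl -!scalerA.
by rewrite big_split /= -!scaler_sumr sum_delta_scale -comb_b.
Qed.

Lemma gordan_step_neg :
  A :\ k != set0 -> (exists c', forall j, j \in A :\ k -> dotv c' (b j) < 0) ->
  exists c', forall j, j \in A -> dotv c' (a j) < 0.
Proof.
move=> A'_ne0 [c' c'_neg].
pose q j := - dotv c (a j); pose L j := dotv c' (a j) / q j.
have q_gt0 j : j \in A :\ k -> 0 < q j by move/c_neg; rewrite oppr_gt0.
have aLk_neg j : j \in A :\ k -> dotv c (a k) * L j + dotv c' (a k) < 0.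
  move=> jA'; rewrite -(pmulr_rlt0 _ (q_gt0 j jA')).
  have -> : q j * (dotv c (a k) * L j + dotv c' (a k)) = dotv c' (b j).
    by rewrite /b dotvBr /= !linearZ /= /L /q; field; rewrite lt_eqF ?c_neg.
  exact: c'_neg.
have [s [L_lt_s ak_neg]] := exists_strict_ub A'_ne0 c_ak_ge0 aLk_neg.
exists (c' + s *: c) => j jA; rewrite dotvDl dotvZl.
have [-> | jk] := eqVneq j k; first by rewrite addrC mulrC.
have jA' : j \in A :\ k by rewrite in_setD1 jk.
have := L_lt_s j jA'; rewrite ltr_pdivrMr ?q_gt0 // /q; nra.
Qed.

End GordanStep.

Theorem gordan A a :
  in_conv_of a A 0 \/ exists c, forall j, j \in A -> dotv c (a j) < 0.
Proof.
elim: {A}_.+1 {-2}A (ltnSn #|A|) a => // m IH A; rewrite ltnS => cardA a.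
have [-> | [k kA]] := set_0Vmem A; first by right; exists 0 => j; rewrite inE.
have cardA' : (#|A :\ k| < m)%N.
  by apply: leq_trans cardA; rewrite (cardsD1 k A) kA.
have [conv' | [c c_neg]] := IH _ cardA' a.
  by left; apply: in_conv_ofS conv'; apply: subsetDl.
have [ak_neg | ak_ge0] := ltP (dotv c (a k)) 0.
  right; exists c => j jA; have [-> // | jk] := eqVneq j k.
  by apply: c_neg; rewrite in_setD1 jk.
have [A'0 | A'_ne0] := eqVneq (A :\ k) set0.
  have Ak j : j \in A -> j = k.
    move=> jA; apply/eqP/negPn/negP => jk.
    by have := in_set0 j; rewrite -A'0 in_setD1 jk jA.
  have [ak0 | ak_ne0] := eqVneq (a k) 0.
    left; apply: (in_conv_of0_normalize (mu := fun j => (j == k)%:R)).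
    - by move=> j; rewrite ler0n.
    - by move=> j; case: eqP => // ->; rewrite kA.
    - by rewrite sum_delta.
    - by rewrite sum_delta_scale.
  by right; exists (- a k) => j /Ak ->; rewrite dotvNl oppr_lt0 dotvv_gt0.
have [conv' | neg'] := IH _ cardA' (fun j => dotv c (a k) *: a j - dotv c (a j) *: a k).
  by left; apply: gordan_step_conv kA c_neg ak_ge0 conv'.
by right; apply: gordan_step_neg c_neg ak_ge0 A'_ne0 neg'.
Qed.

End Gordan.

Section Duality.
Variables (R : realFieldType) (n : nat).

Lemma dotv_linear (f : 'rV[R]_n -> R) : linear_for *%R f ->
  exists c, forall x, dotv c x = f x.
Proof.
move=> f_lin; exists (\row_k f (delta_mx 0 k)) => x.
pose fL := GRing.isLinear.Build R 'rV[R]_n R *%R f f_lin.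
pose F : {scalar 'rV[R]_n} := HB.pack f fL.
rewrite {2}(row_sum_delta x) -[f _]/(F _) linear_sum /dotv.
by apply: eq_bigr => k _; rewrite linearZ mxE mulrC.
Qed.

Lemma free_dotv_interp (k : nat) (X : k.-tuple 'rV[R]_n) (b : 'I_k -> R) :
  free X -> exists c, forall i : 'I_k, dotv c X`_i = b i.
Proof.
move=> freeX; pose f x := \sum_(i < k) b i * coord X i x.
have [|c cf] := @dotv_linear f.
  move=> a x y; rewrite /f mulr_sumr -big_split; apply: eq_bigr => i _.
  by rewrite linearP mulrDr mulrCA.
exists c => j; rewrite cf /f (bigD1 j) //= coord_free // eqxx mulr1 big1 ?addr0 //.
by move=> i ij; rewrite coord_free // eq_sym (negbTE ij) mulr0.
Qed.

Lemma dotv_separate (U : {vspace 'rV[R]_n}) y : y \notin U ->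
  exists c, {in U, forall w, dotv c w = 0} /\ dotv c y = 1.
Proof.
move=> yU; pose X := [tuple of y :: vbasis U].
have freeX : free X.
  by rewrite free_cons (span_basis (vbasisP U)) yU; case/andP: (vbasisP U).
have [c c_X] := free_dotv_interp (fun i : 'I_(\dim U).+1 => (i == ord0)%:R) freeX.
exists c; split; last exact: c_X ord0.
move=> w /coord_vbasis ->; rewrite linear_sum big1 // => i _.
by rewrite linearZ /=; have := c_X (lift ord0 i); rewrite /= => ->; rewrite mulr0.
Qed.

Variables (I : finType) (S : {set I}) (f : I -> 'rV[R]_n).

Lemma free_image_interp (b : I -> R) : free (image f S) ->
  exists c, {in S, forall u, dotv c (f u) = b u}.
Proof.
move=> freeS.
have [c c_S] := free_dotv_interp (b \o enum_val) (freeS : free (image_tuple f S)).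
exists c => u uS; have := c_S (enum_rank_in uS u).
by rewrite /= (nth_image 0) enum_rankK_in.
Qed.

Lemma free_image_dual :
  {in S, forall u, exists c,
    {in S, forall w, w != u -> dotv c (f w) = 0} /\ dotv c (f u) != 0} ->
  free (image f S).
Proof.
move=> dual; apply/(@freeP _ _ _ (image_tuple f S)) => a sum_a0 i.
have [c [c0 c_i]] := dual _ (enum_valP i).
have := congr1 (dotv c) sum_a0; rewrite linear_sum linear0 (bigD1 i) //= big1.
  by rewrite addr0 linearZ (nth_image 0) => /eqP; rewrite mulf_eq0 (negbTE c_i) orbF => /eqP.
move=> j ji; rewrite linearZ /= (nth_image 0) c0 ?mulr0 ?enum_valP //.
by apply: contra ji => /eqP/enum_val_inj ->.
Qed.

End Duality.

Section Faces.
Variables (R : realFieldType) (n : nat) (T : finType) (V : T -> 'rV[R]_n).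
Implicit Types (c e : 'rV[R]_n) (F G H : {set T}).

Definition exposed_face c F :=
  [set y in F | [forall (x | x \in F), dotv c (V x) <= dotv c (V y)]].

Lemma exposed_faceP c F y : reflect
  (y \in F /\ forall x, x \in F -> dotv c (V x) <= dotv c (V y))
  (y \in exposed_face c F).
Proof. by rewrite inE; apply: (iffP andP) => -[yF /forall_inP]. Qed.

Lemma exposed_face_dotv_eq c F x y : x \in exposed_face c F -> y \in exposed_face c F ->
  dotv c (V x) = dotv c (V y).
Proof.
move=> /exposed_faceP[xF x_max] /exposed_faceP[yF y_max].
by apply/eqP; rewrite eq_le x_max ?y_max.
Qed.

Lemma exposed_face_sub c F : exposed_face c F \subset F.
Proof. by apply/subsetP => y /exposed_faceP[]. Qed.

Lemma is_faceE F : is_face V F <-> exists c, F = exposed_face c [set: T].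
Proof.
split=> -[c ->]; exists c; apply/setP => y; rewrite !inE;
  by apply: eq_forallb => x; rewrite in_setT.
Qed.

Lemma face_exists_mem F (i0 : T) : is_face V F -> exists y, y \in F.
Proof.
case/is_faceE => c ->.
have [y _ y_max] := arg_maxP (fun x => dotv c (V x)) (in_setT i0).
by exists y; apply/exposed_faceP; split => // x /y_max.
Qed.

Lemma is_face_exposed_face c F y0 :
  is_face V F -> y0 \in F -> is_face V (exposed_face c F).
Proof.
case/is_faceE => cF -> y0F; set G := exposed_face cF _ in y0F *.
(* For large [la], [c + la *: cF] exposes the [c]-maximal part of [G]. *)
have cF_G := @exposed_face_dotv_eq cF [set: T].
have cF_lt x : x \notin G -> dotv cF (V x) < dotv cF (V y0).
  move=> xG; rewrite ltNge; apply: contra xG => x_ge; apply/exposed_faceP.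
  by split => // z _; apply: le_trans x_ge; case/exposed_faceP: y0F => _; apply.
have [la la_gt] : exists la, forall x, x \notin G ->
    dotv c (V x) - dotv c (V y0) < la * (dotv cF (V y0) - dotv cF (V x)).
  by apply: exists_scale_bound => x /cF_lt; rewrite subr_gt0.
have [h hG h_max] := arg_maxP (fun x => dotv c (V x)) y0F.
pose c' := c + la *: cF.
have c'_lt x y : x \notin G -> y \in exposed_face c G -> dotv c' (V x) < dotv c' (V y).
  move=> xG /exposed_faceP[yG y_max]; rewrite !dotvDl !dotvZl (cF_G y y0) //.
  by have := la_gt x xG; have := y_max y0 y0F; lra.
apply/is_faceE; exists c'; apply/setP => y; apply/exposed_faceP/exposed_faceP.
  case=> yG y_max; split=> // x _.
  have yE : y \in exposed_face c G by apply/exposed_faceP.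
  have [xG | xG] := boolP (x \in G); last exact/ltW/c'_lt.
  by rewrite !dotvDl !dotvZl (cF_G x y) ?lerD2r ?y_max.
case=> _ y_max.
have hE : h \in exposed_face c G by apply/exposed_faceP; split => // x /h_max.
have yG : y \in G by apply: contraT => /(c'_lt _ h)/(_ hE); rewrite ltNge y_max ?in_setT.
split=> // x xG; have := y_max x (in_setT x).
by rewrite !dotvDl !dotvZl (cF_G x y) // lerD2r.
Qed.

Definition dir_space F := <<[seq V i - V j | i <- enum F, j <- enum F]>>%VS.

Lemma mem_dir_space F i j : i \in F -> j \in F -> V i - V j \in dir_space F.
Proof.
by move=> iF jF; apply/memv_span/(allpairs_f (fun i j => V i - V j)); rewrite mem_enum.
Qed.

Lemma dir_space_subv F v (U : {vspace 'rV[R]_n}) : v \in F ->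
  (forall x, x \in F -> V x - V v \in U) -> (dir_space F <= U)%VS.
Proof.
move=> vF FU; apply/span_subvP => _ /allpairsP[[i j] [/= + + ->]].
rewrite !mem_enum => iF jF.
have -> : V i - V j = (V i - V v) - (V j - V v) by rewrite opprB addrA subrK.
exact: memvB (FU i iF) (FU j jF).
Qed.

Lemma fdim_subset F G : F \subset G -> (fdim V F <= fdim V G)%N.
Proof.
move=> FG; apply/dimvS/span_subvP => _ /allpairsP[[i j] [/= + + ->]].
by rewrite !mem_enum => iF jF; apply: mem_dir_space; apply: (subsetP FG).
Qed.

Definition nbr F v := [set u in F | `[< adj V u v >]].

Lemma nbrP F v u : reflect (u \in F /\ adj V u v) (u \in nbr F v).
Proof. by rewrite inE; apply: (iffP andP) => -[uF /asboolP]. Qed.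

Lemma nbr_sub F v : nbr F v \subset F.
Proof. by apply/subsetP => u /nbrP[]. Qed.

Definition edge_dirs F v := image (fun u => V u - V v) (nbr F v).

Lemma edge_dirs_subv F v : v \in F -> (<<edge_dirs F v>> <= dir_space F)%VS.
Proof.
move=> vF; apply/span_subvP => _ /imageP[u /nbrP[uF _] ->].
exact: mem_dir_space.
Qed.

End Faces.

Section Vertices.
Variables (R : realFieldType) (n : nat) (T : finType) (V : T -> 'rV[R]_n).
Hypothesis cp : convex_position V.
Implicit Types (c e : 'rV[R]_n) (F G H : {set T}).

Lemma convex_position_inj : injective V.
Proof.
move=> i j Vij; have [// | ij] := eqVneq i j; exfalso; apply: (@cp i).
exists (fun k => (k == j)%:R); split.
- by move=> k; rewrite ler0n.
- by move=> k; rewrite !inE negbK => /eqP ->; rewrite (negbTE ij).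
- exact: sum_delta.
- by rewrite sum_delta_scale Vij.
Qed.

Lemma vertex_exposed v : exists c, forall y, y != v -> dotv c (V y) < dotv c (V v).
Proof.
have [[lam [lam_ge0 lamA lam1 lam0]] | [c c_neg]] := gordan [set~ v] (fun j => V j - V v).
  case: (@cp v); exists lam; split => //; move: lam0.
  under eq_bigr do rewrite scalerBr.
  by rewrite sumrB -scaler_suml lam1 scale1r => /eqP; rewrite subr_eq0 => /eqP.
by exists c => y yv; have := c_neg y; rewrite !inE yv dotvBr subr_lt0; apply.
Qed.

(* Rotate [cv] towards [e] until a second vertex of [F] ties with [v]. *)
Lemma exposed_face_tilt F v cv e y0 : v \in F ->
  (forall y, y != v -> dotv cv (V y) < dotv cv (V v)) ->
  y0 \in F -> dotv e (V v) < dotv e (V y0) ->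
  exists t, [/\ 0 < t, v \in exposed_face V (cv + t *: e) F
              & (1 < #|exposed_face V (cv + t *: e) F|)%N].
Proof.
move=> vF cv_v y0F e_y0.
pose ratio y := (dotv cv (V v) - dotv cv (V y)) / (dotv e (V y) - dotv e (V v)).
have y0P : y0 \in [set y in F | dotv e (V v) < dotv e (V y)] by rewrite inE y0F.
have [y1 /setIdP[y1F e_y1] y1_min] := arg_minP ratio y0P.
have y1v : y1 != v by apply: contraTneq e_y1 => ->; rewrite ltxx.
set t := ratio y1; set c := cv + t *: e.
have t_gt0 : 0 < t by rewrite divr_gt0 // subr_gt0 ?cv_v.
have c_max y : y \in F -> dotv c (V y) <= dotv c (V v).
  move=> yF; rewrite !dotvDl !dotvZl.
  have cv_le : dotv cv (V y) <= dotv cv (V v) by have [->|/cv_v/ltW] := eqVneq y v.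
  have [e_le | e_gt] := leP (dotv e (V y)) (dotv e (V v)); first by nra.
  have /y1_min : y \in [set y in F | dotv e (V v) < dotv e (V y)] by rewrite inE yF.
  by rewrite ler_pdivlMr ?subr_gt0 // -/t; lra.
have c_y1 : dotv c (V y1) = dotv c (V v).
  by rewrite !dotvDl !dotvZl /t /ratio; field; rewrite subr_eq0 gt_eqF.
have vE : v \in exposed_face V c F by apply/exposed_faceP.
have y1E : y1 \in exposed_face V c F by apply/exposed_faceP; rewrite c_y1.
by exists t; split => //; apply/card_gt1P; exists v, y1; rewrite eq_sym y1v.
Qed.

Lemma face_shrink G v : is_face V G -> v \in G -> (1 < fdim V G)%N ->
  exists H, [/\ is_face V H, v \in H, H \proper G & (1 < #|H|)%N].
Proof.
move=> fG vG dimG.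
have not_in_line a : ~ (forall y, y \in G -> V y - V v \in <[a]>%VS).
  move=> G_line; have := dimvS (dir_space_subv vG G_line).
  by rewrite dim_vline => /(leq_trans dimG); case: (a != 0).
have [x xG xv] : exists2 x, x \in G & x != v.
  apply/exists_inP; apply: contraT => /exists_inPn all_v; case: (not_in_line 0).
  by move=> y /all_v; rewrite negbK => /eqP ->; rewrite subrr mem0v.
have [y yG y_out] : exists2 y, y \in G & V y - V v \notin <[V x - V v]>%VS.
  apply/exists_inP; apply: contraT => /exists_inPn G_line; case: (not_in_line (V x - V v)).
  by move=> z /G_line; rewrite negbK.
have [e [e0 e1]] := dotv_separate y_out.
have e_x : dotv e (V x) = dotv e (V v).
  by have /eqP := e0 _ (memv_line (V x - V v)); rewrite dotvBr subr_eq0 => /eqP.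
have [cv cv_v] := vertex_exposed v.
have [|t [_ vH H2]] := exposed_face_tilt vG cv_v yG (e := e).
  by rewrite -subr_gt0; move: e1; rewrite dotvBr => ->; rewrite ltr01.
exists (exposed_face V (cv + t *: e) G); split => //.
  exact: is_face_exposed_face fG vG.
apply/properP; split; first exact: exposed_face_sub.
exists x => //; apply/negP => /exposed_faceP[_ /(_ v vG)].
by rewrite !dotvDl !dotvZl e_x lerD2r leNgt cv_v.
Qed.

Lemma face_nbr_exists G v : is_face V G -> v \in G -> (1 < #|G|)%N ->
  exists u, u \in nbr V G v.
Proof.
elim: {G}_.+1 {-2}G (ltnSn #|G|) => // m IH G; rewrite ltnS => cardG fG vG G2.
have [x xG xv] : exists2 x, x \in G & x != v.
  have /card_gt0P[x] : (0 < #|G :\ v|)%N by move: G2; rewrite (cardsD1 v G) vG.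
  by rewrite in_setD1 => /andP[xv xG]; exists x.
have [dimG | ] := ltnP 1 (fdim V G).
  have [H [fH vH HG H2]] := face_shrink fG vG dimG.
  have [u /nbrP[uH uv]] := IH H (leq_trans (proper_card HG) cardG) fH vH H2.
  by exists u; apply/nbrP; split => //; apply: (subsetP (proper_sub HG)).
rewrite leq_eqVlt ltnS leqn0 => /orP[/eqP dim1 | dim0].
  by exists x; apply/nbrP; split => //; split; [exact/eqP | exists G].
case/eqP: xv; apply: convex_position_inj; apply/eqP; rewrite -subr_eq0.
by move: dim0 (mem_dir_space V xG vG); rewrite /dir_space dimv_eq0 => /eqP ->; rewrite memv0.
Qed.

Lemma face_max_of_nbr_max F v c : is_face V F -> v \in F ->
  (forall u, u \in nbr V F v -> dotv c (V u) <= dotv c (V v)) ->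
  forall x, x \in F -> dotv c (V x) <= dotv c (V v).
Proof.
move=> fF vF c_nbr x xF; rewrite leNgt; apply/negP => c_x.
(* Tilting the functional exposing [v] towards [c] yields a face through [v]
   with an edge at [v] along which [c] increases. *)
have [cv cv_v] := vertex_exposed v.
have [t [t_gt0 vH H2]] := exposed_face_tilt vF cv_v xF c_x.
have [u uN] := face_nbr_exists (is_face_exposed_face _ fF vF) vH H2.
case/nbrP: (uN) => /exposed_faceP[uF /(_ v vF) c_vu] u_adj.
have c_u : dotv c (V u) <= dotv c (V v) by apply: c_nbr; apply/nbrP.
have /cv_v : u != v by case: u_adj => /eqP.
have : t * dotv c (V u) <= t * dotv c (V v) by rewrite ler_pM2l.
by move: c_vu; rewrite !dotvDl !dotvZl; lra.
Qed.

Lemma face_subset_of_nbr F H v : is_face V F -> is_face V H -> v \in F -> v \in H ->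
  nbr V F v \subset H -> F \subset H.
Proof.
move=> fF /is_faceE[cH ->] vF /exposed_faceP[_ v_max] nbrH.
apply/subsetP => x xF; apply/exposed_faceP; split=> // z zT.
apply: le_trans (v_max z zT) _; rewrite -lerN2 -!dotvNl.
apply: (face_max_of_nbr_max fF vF) xF => u /(subsetP nbrH)/exposed_faceP[_ u_max].
by rewrite !dotvNl lerN2 u_max.
Qed.

Lemma face_eq_of_nbr F G v : is_face V F -> is_face V G -> v \in F -> v \in G ->
  nbr V F v = nbr V G v -> F = G.
Proof.
move=> fF fG vF vG nbrFG; apply/eqP; rewrite eqEsubset.
rewrite (face_subset_of_nbr fF fG vF vG) ?nbrFG ?nbr_sub //.
by rewrite (face_subset_of_nbr fG fF vG vF) -?nbrFG ?nbr_sub.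
Qed.

Lemma dir_space_edge_dirs F v : is_face V F -> v \in F ->
  (dir_space V F <= <<edge_dirs V F v>>)%VS.
Proof.
move=> fF vF; apply: (dir_space_subv vF) => x xF.
apply: contraT => /dotv_separate[c [c0 c1]].
have le_v c' : {in <<edge_dirs V F v>>%VS, forall w, dotv c' w = 0} ->
    dotv c' (V x) <= dotv c' (V v).
  move=> c'0; apply: (face_max_of_nbr_max fF vF) xF => u uN.
  have /eqP := c'0 _ (memv_span (image_f (fun u => V u - V v) uN)).
  by rewrite dotvBr subr_eq0 => /eqP ->.
have Nc0 : {in <<edge_dirs V F v>>%VS, forall w, dotv (- c) w = 0}.
  by move=> w /c0; rewrite dotvNl => ->; rewrite oppr0.
have := le_v c c0; have := le_v _ Nc0.
by move: c1; rewrite dotvBr !dotvNl lerN2; lra.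
Qed.

Lemma free_edge_dirsE F v : is_face V F -> v \in F ->
  free (edge_dirs V F v) = (#|nbr V F v| == fdim V F).
Proof.
move=> fF vF; rewrite /free size_image eq_sym.
have -> // : \dim <<edge_dirs V F v>> = fdim V F.
by apply/eqP; rewrite eqn_leq dimvS ?edge_dirs_subv ?dimvS ?dir_space_edge_dirs.
Qed.

Lemma simple_vertex_face H v (S : {set T}) : is_face V H -> v \in H ->
  #|nbr V H v| = fdim V H -> S \subset nbr V H v ->
  exists G, [/\ is_face V G, v \in G & nbr V G v = S].
Proof.
move=> fH vH simple SN.
have free_edges : free (edge_dirs V H v).
  by rewrite free_edge_dirsE // simple.
have [c c_nbr] := free_image_interp (fun u => if u \in S then 0 else -1) free_edges.
have c_le u : u \in nbr V H v -> dotv c (V u) <= dotv c (V v).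
  by move=> /c_nbr; rewrite dotvBr; case: (u \in S) => c_u; lra.
have v_max := face_max_of_nbr_max fH vH c_le.
exists (exposed_face V c H); split.
- exact: is_face_exposed_face fH vH.
- by apply/exposed_faceP.
apply/setP => u; apply/nbrP/idP => [[/exposed_faceP[uH u_max] uv] | uS].
  have /c_nbr : u \in nbr V H v by apply/nbrP.
  by rewrite dotvBr; case: (u \in S) => // c_u; have := u_max v vH; lra.
have uN := subsetP SN u uS; case/nbrP: (uN) => uH uv; split=> //.
apply/exposed_faceP; split=> // x xH; apply: le_trans (v_max x xH) _.
by have := c_nbr u uN; rewrite uS dotvBr => c_u; lra.
Qed.

End Vertices.

Lemma sink_exists (R : realFieldType) (n : nat) (T : finType) (V : T -> 'rV[R]_n)
    (O : rel T) (F : {set T}) x0 :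
  orientation V O -> acyclic O -> x0 \in F -> exists v, sink_of V O F v.
Proof.
move=> [_ O_or] acyc x0F; pose reach v := [set w | connect O v w].
have [v vF v_min] := arg_minnP (fun v => #|reach v|) x0F.
exists v; split=> // u uF uv; have [[] // | [Ovu _]] := O_or u v uv.
have : reach u \proper reach v.
  apply/properP; split.
    by apply/subsetP => w; rewrite !inE; apply/connect_trans/connect1.
  by exists v; rewrite !inE ?connect0 ?acyc.
by rewrite properEcard => /andP[_]; rewrite ltnNge v_min.
Qed.

Definition faces (R : realFieldType) (n : nat) (T : finType) (V : T -> 'rV[R]_n) :=
  [set F : {set T} | `[< is_face V F >]].

Lemma sum_fnum (R : realFieldType) (n d : nat) (T : finType) (V : T -> 'rV[R]_n) :
  fdim V [set: T] = d -> (\sum_(i < d.+1) fnum V i = #|faces V|)%N.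
Proof.
move=> dimT; rewrite -sum1_card.
rewrite [RHS](partition_big (fun F => inord (fdim V F) : 'I_d.+1) xpredT) //=.
apply: eq_bigr => i _; rewrite /fnum -sum1_card; apply: eq_bigl => F; rewrite !inE.
have F_lt : (fdim V F < d.+1)%N by rewrite ltnS -dimT fdim_subset ?subsetT.
apply/asboolP/andP => [[fF Fi] | [/asboolP fF /eqP <-]]; last by rewrite inordK.
by split; [apply/asboolP | apply/eqP/val_inj; rewrite /= inordK // -Fi].
Qed.

Definition in_pairs (T : finType) (O : rel T) :=
  [set p : T * {set T} | p.2 \subset [set u | O u p.1]].

Lemma fO_card_in_pairs (T : finType) (O : rel T) : fO O = #|in_pairs O|.
Proof.
rewrite /fO /indeg; under eq_bigr do rewrite -card_powerset -sum1_card.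
by rewrite pair_big_dep -sum1_card; apply: eq_bigl => -[v S]; rewrite /= powersetE inE.
Qed.

Section Flags.
Variables (R : realFieldType) (n : nat) (T : finType) (V : T -> 'rV[R]_n) (O : rel T).
Hypotheses (cp : convex_position V) (O_or : orientation V O) (O_acyc : acyclic O).
Variable i0 : T.

Definition sink F := odflt i0 [pick v | `[< sink_of V O F v >]].

Definition flag F := (sink F, nbr V F (sink F)).

Lemma sinkP F : is_face V F -> sink_of V O F (sink F).
Proof.
move=> fF; have [y yF] := face_exists_mem i0 fF.
have [w w_sink] := sink_exists O_or O_acyc yF.
rewrite /sink; case: pickP => [x /asboolP // | no_sink].
by have := no_sink w; rewrite (asboolT w_sink).
Qed.

Lemma nbr_sink_sub F v : sink_of V O F v -> nbr V F v \subset [set u | O u v].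
Proof. by case=> _ v_sink; apply/subsetP => u /nbrP[uF uv]; rewrite inE v_sink. Qed.

Lemma flag_inj : {in faces V &, injective flag}.
Proof.
move=> F G; rewrite !inE => /asboolP fF /asboolP fG [sinkFG nbrFG].
have [sF _] := sinkP fF; have [sG _] := sinkP fG.
by rewrite sinkFG in sF nbrFG; apply: face_eq_of_nbr nbrFG.
Qed.

Lemma flag_sub : flag @: faces V \subset in_pairs O.
Proof.
apply/subsetP => _ /imsetP[F /[!inE] /asboolP fF ->].
by apply: nbr_sink_sub; apply: sinkP.
Qed.

Lemma fO_card_faces_iff : (fO O = #|faces V|)%N <-> in_pairs O \subset flag @: faces V.
Proof.
rewrite fO_card_in_pairs -(card_in_imset flag_inj); split => [E | onto].
  by have /eqP <- : flag @: faces V == in_pairs O by rewrite eqEcard flag_sub E /=.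
by apply/eqP; rewrite eqn_leq !subset_leq_card ?flag_sub.
Qed.

Section Onto.
Hypothesis flag_onto : in_pairs O \subset flag @: faces V.

Lemma exists_flag v (S : {set T}) : S \subset [set u | O u v] ->
  exists G, [/\ is_face V G, sink G = v & nbr V G v = S].
Proof.
move=> S_in; have : (v, S) \in in_pairs O by rewrite inE.
by move=> /(subsetP flag_onto)/imsetP[G /[!inE] /asboolP fG [-> ->]]; exists G.
Qed.

Lemma onto_unique_sink F : is_face V F -> exists! v, sink_of V O F v.
Proof.
move=> fF; exists (sink F); split=> [|w w_sink]; first exact: sinkP.
have [G [fG sinkG nbrG]] := exists_flag (nbr_sink_sub w_sink).
have [wG _] := sinkP fG; rewrite sinkG in wG.
by rewrite -(face_eq_of_nbr cp fG fF wG w_sink.1 nbrG).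
Qed.

Lemma onto_free_edge_dirs F v : sink_of V O F v -> free (edge_dirs V F v).
Proof.
move=> v_sink; apply: free_image_dual => u uN.
have S_in := subset_trans (subsetDl _ [set u]) (nbr_sink_sub v_sink).
have [G [fG sinkG nbrG]] := exists_flag S_in.
have [vG _] := sinkP fG; rewrite sinkG in vG.
case/is_faceE: (fG) => cG defG; rewrite defG in vG; exists cG; split => [w wN wu | ].
  have : w \in G by apply: (subsetP (nbr_sub V G v)); rewrite nbrG in_setD1 wu.
  by rewrite defG /= dotvBr => wG; rewrite (exposed_face_dotv_eq wG vG) subrr.
rewrite /= dotvBr subr_eq0; apply/negP => /eqP cG_uv.
have : u \in nbr V G v.
  apply/nbrP; split; last by case/nbrP: uN.
  case/exposed_faceP: vG => _ v_max; rewrite defG.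
  by apply/exposed_faceP; split=> [|x xT]; rewrite ?in_setT ?cG_uv ?v_max.
by rewrite nbrG in_setD1 eqxx.
Qed.

Lemma onto_simple F v : is_face V F -> sink_of V O F v -> deg_in V F v = fdim V F.
Proof.
move=> fF v_sink; apply/eqP.
by rewrite -[deg_in _ _ _]/#|nbr V F v| -free_edge_dirsE ?onto_free_edge_dirs //; case: v_sink.
Qed.

Lemma onto_in_face v :
  exists F, [/\ is_face V F, sink_of V O F v & forall u, O u v -> u \in F].
Proof.
have [G [fG sinkG nbrG]] := exists_flag (subxx [set u | O u v]).
exists G; split => //; first by rewrite -sinkG; apply: sinkP.
by move=> u Ouv; apply: (subsetP (nbr_sub V G v)); rewrite nbrG inE.
Qed.

End Onto.

Lemma flag_onto_of_conditions :
  (forall F, is_face V F -> exists! v, sink_of V O F v) ->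
  (forall F, is_face V F -> forall v, sink_of V O F v -> deg_in V F v = fdim V F) ->
  (forall v, exists F, [/\ is_face V F, sink_of V O F v & forall u, O u v -> u \in F]) ->
  in_pairs O \subset flag @: faces V.
Proof.
move=> uniq_sink simple in_face; apply/subsetP => -[v S] /[!inE] /= S_in.
have [H [fH H_sink in_H]] := in_face v.
have nbrH : nbr V H v = [set u | O u v].
  apply/eqP; rewrite eqEsubset nbr_sink_sub //=; apply/subsetP => u; rewrite inE => Ouv.
  by apply/nbrP; split; [apply: in_H | apply: O_or.1].
have SH : S \subset nbr V H v by rewrite nbrH.
have [G [fG vG nbrG]] := simple_vertex_face cp fH H_sink.1 (simple _ fH _ H_sink) SH.
have G_sink : sink_of V O G v.
  split => // u uG uv; have : u \in S by rewrite -nbrG; apply/nbrP.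
  by move/(subsetP S_in); rewrite inE.
have sinkG : sink G = v.
  have [w [_ w_uniq]] := uniq_sink G fG.
  by rewrite -(w_uniq _ (sinkP fG)) (w_uniq _ G_sink).
apply/imsetP; exists G; first by rewrite inE; apply/asboolP.
by rewrite /flag sinkG nbrG.
Qed.

End Flags.

Theorem lemma2p11 (R : realFieldType) (n d : nat) (T : finType)
  (V : T -> 'rV[R]_n) (O : rel T) :
  (0 < #|T|)%N ->
  convex_position V ->
  fdim V [set: T] = d ->
  orientation V O ->
  acyclic O ->
  (fO O = \sum_(i < d.+1) fnum V i)%N <->
  [/\ (forall F, is_face V F -> exists! v, sink_of V O F v),
      (forall F, is_face V F -> forall v, sink_of V O F v ->
          deg_in V F v = fdim V F)
    & (forall v : T, exists F, [/\ is_face V F, sink_of V O F v &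
          forall u, O u v -> u \in F])].
Proof.
move=> T_gt0 cp dimT O_or O_acyc; have [i0 _] := card_gt0P T_gt0.
have card_iff := fO_card_faces_iff cp O_or O_acyc i0.
rewrite (sum_fnum dimT); split => [/card_iff onto | [uniq_sink simple in_face]].
  split.
  - by move=> F; apply: (onto_unique_sink cp O_or O_acyc onto).
  - by move=> F fF v; apply: (onto_simple cp O_or O_acyc onto fF).
  - by move=> v; apply: (onto_in_face O_or O_acyc onto).
by apply/card_iff; apply: flag_onto_of_conditions cp O_or O_acyc _ uniq_sink simple in_face.
Qed.
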